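(* Let $T=2^m$, $d\ge1$ and $u_{1:T}\in(\mathbb{R}^d)^T$. With the Haar coefficients and detail sequences defined in the context, for every scale-location pair $(j,l)$, $$\|\hat u^{(j,l)}\|_2=2^{-1/2}\sqrt{P^{(j,l)}\bar S^{(j,l)}},$$ and for every scale $j$, $$\sum_l\|\hat u^{(j,l)}\|_2\le 2^{-1/2}\sqrt{P^{(j)}\bar S^{(j)}}.$$
   Context: Haar features for $T=2^m$: for scale $j\in[1:m]$ and location $l\in[1:2^{-j}T]$, $h^{(j,l)}\in\mathbb{R}^T$ has $t$-th entry $1$ for $t\in[2^j(l-1)+1:2^j(l-1)+2^{j-1}]$, $-1$ for $t\in[2^j(l-1)+2^{j-1}+1:2^jl]$, and $0$ otherwise; normalized $\tilde h^{(j,l)}=2^{-j/2}h^{(j,l)}$. For $i\in[1:d]$, $u^{(i)}_{1:T}\in\mathbb{R}^T$ is the sequence of $i$-th coordinates of $u_1,\ldots,u_T$. Coefficient $\hat u^{(j,l)}\in\mathbb{R}^d$ has $i$-th entry $\langle\tilde h^{(j,l)},u^{(i)}_{1:T}\rangle$. Detail sequences $z^{(j,l)}\in(\mathbb{R}^d)^T$: $z^{(j,l)}_t=\hat u^{(j,l)}\tilde h^{(j,l)}_t$; $z^{(j)}=\sum_l z^{(j,l)}$. Statistics: $\bar S^{(j,l)}=\sum_{t=1}^T\|z^{(j,l)}_t\|_2$, $\bar S^{(j)}=\sum_{t=1}^T\|z^{(j)}_t\|_2$, $P^{(j,l)}=\sum_{t=2^j(l-1)+1}^{2^jl-1}\|z^{(j,l)}_{t+1}-z^{(j,l)}_t\|_2$,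 $P^{(j)}=\sum_l P^{(j,l)}$. *)

From mathcomp Require Import all_boot all_order all_algebra.
From mathcomp Require Import reals.
Set Implicit Arguments. Unset Strict Implicit. Unset Printing Implicit Defensive.
Import Order.TTheory GRing.Theory Num.Theory.
Local Open Scope ring_scope.

Section Haar.
Variable R : realType.
Variable d : nat.

Definition norm2 (x : 'rV[R]_d) : R := Num.sqrt (\sum_(i < d) x 0 i ^+ 2).

(* unnormalized Haar feature h^(j,l)_t, time index t is 1-based *)
Definition haar (j l t : nat) : R :=
  if (2 ^ j * (l - 1) + 1 <= t <= 2 ^ j * (l - 1) + 2 ^ (j - 1))%N then 1
  else if (2 ^ j * (l - 1) + 2 ^ (j - 1) + 1 <= t <= 2 ^ j * l)%N then -1
  else 0.

Definition haarn (j l t : nat) : R := (Num.sqrt (2 ^+ j))^-1 * haar j l t.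

Variable m : nat.
Variable u : nat -> 'rV[R]_d.   (* u_t for t in [1:T], T = 2^m *)

Definition T := (2 ^ m)%N.

Definition uhat (j l : nat) : 'rV[R]_d :=
  \row_i \sum_(1 <= t < T.+1) haarn j l t * u t 0 i.

Definition zdet (j l t : nat) : 'rV[R]_d := haarn j l t *: uhat j l.
Definition zscale (j t : nat) : 'rV[R]_d :=
  \sum_(1 <= l < (2 ^ (m - j)).+1) zdet j l t.

Definition Sbar (j l : nat) : R := \sum_(1 <= t < T.+1) norm2 (zdet j l t).
Definition Sbar_scale (j : nat) : R := \sum_(1 <= t < T.+1) norm2 (zscale j t).
Definition Pjl (j l : nat) : R :=
  \sum_(2 ^ j * (l - 1) + 1 <= t < 2 ^ j * l)
     norm2 (zdet j l t.+1 - zdet j l t).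
Definition Pscale (j : nat) : R := \sum_(1 <= l < (2 ^ (m - j)).+1) Pjl j l.

End Haar.

(** On its support, a block of 2^j consecutive times, the normalized Haar
    feature h~(j,l) equals +2^(-j/2) on the first half and -2^(-j/2) on the
    second, so z(j,l)_t = ±2^(-j/2) û(j,l) there.  Hence
    S(j,l) = 2^j 2^(-j/2) |û| = 2^(j/2) |û|, while the only nonzero increment
    of z(j,l) inside the block is the sign flip at the midpoint, of norm
    2 2^(-j/2) |û|; the product P(j,l) S(j,l) is 2 |û|^2.  At a fixed scale the
    blocks have disjoint supports, so S(j) and P(j) are the sums over l of the
    block statistics, and the same computation gives the second claim, in fact
    with equality. *)

From mathcomp Require Import all_boot all_order all_algebra.
From mathcomp Require Import reals.
From mathcomp Require Import zify.
Import Order.TTheory GRing.Theory Num.Theory.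
Set Implicit Arguments. Unset Strict Implicit. Unset Printing Implicit Defensive.
Local Open Scope ring_scope.

Section HaarWindow.
Variable R : realType.

Definition haar_window (a h t : nat) : R :=
  if (a + 1 <= t <= a + h)%N then 1
  else if (a + h + 1 <= t <= a + h + h)%N then -1 else 0.

Lemma haar_window_first_half a h t :
  (a < t <= a + h)%N -> haar_window a h t = 1.
Proof. by move=> t_in; rewrite /haar_window ifT //; lia. Qed.

Lemma haar_window_second_half a h t :
  (a + h < t <= a + h + h)%N -> haar_window a h t = -1.
Proof. by move=> t_in; rewrite /haar_window ifN ?ifT //; lia. Qed.

Lemma haar_window_outside a h t :
  ~~ (a < t <= a + h + h)%N -> haar_window a h t = 0.
Proof. by move=> t_out; rewrite /haar_window !ifN //; lia. Qed.

Lemma haar_window_support a h t :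
  haar_window a h t != 0 -> (a < t <= a + h + h)%N.
Proof. by apply: contraNT => /haar_window_outside ->. Qed.

Lemma sum_abs_haar_window a h p q : (0 < h)%N -> (p <= a + 1)%N ->
  (a + h + h < q)%N -> \sum_(p <= t < q) `|haar_window a h t| = (h + h)%:R.
Proof.
move=> h_gt0 p_le q_gt.
rewrite (big_cat_nat _ (n := (a + 1)%N)) //=; last lia.
rewrite (big_cat_nat _ (n := (a + h + h + 1)%N) (m := (a + 1)%N)) /=; try lia.
rewrite [X in X + _]big1_seq => [|t /andP[_]]; last first.
  by rewrite mem_index_iota => t_in; rewrite haar_window_outside ?normr0 //; lia.
rewrite [X in _ + (_ + X)]big1_seq => [|t /andP[_]]; last first.
  by rewrite mem_index_iota => t_in; rewrite haar_window_outside ?normr0 //; lia.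
rewrite add0r addr0 (eq_big_seq (fun=> 1)) => [|t]; last first.
  rewrite mem_index_iota => t_in; have [t_le|t_gt] := leqP t (a + h).
    by rewrite haar_window_first_half ?normr1 //; lia.
  by rewrite haar_window_second_half ?normrN ?normr1 //; lia.
by rewrite sumr_const_nat; congr (_ *+ _); lia.
Qed.

Lemma sum_abs_increments_haar_window a h : (0 < h)%N ->
  \sum_(a + 1 <= t < a + h + h) `|haar_window a h t.+1 - haar_window a h t|
    = 2.
Proof.
move=> h_gt0.
rewrite (big_cat_nat _ (n := (a + h)%N)) //=; try lia.
rewrite (big_cat_nat _ (n := (a + h).+1) (m := (a + h)%N)) //=; try lia.
rewrite [X in X + _]big1_seq => [|t /andP[_]]; last first.
  rewrite mem_index_iota => t_in.
  by rewrite !haar_window_first_half ?subrr ?normr0 //; lia.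
rewrite [X in _ + (_ + X)]big1_seq => [|t /andP[_]]; last first.
  rewrite mem_index_iota => t_in.
  by rewrite !haar_window_second_half ?subrr ?normr0 //; lia.
rewrite add0r addr0 big_nat1 (haar_window_second_half (t := (a + h).+1));
  rewrite ?(haar_window_first_half (t := a + h)); try lia.
by rewrite -opprD normrN ger0_norm // addr_ge0 ?ler01.
Qed.

End HaarWindow.

Section Norm2.
Variables (R : realType) (d : nat).
Implicit Types (v : 'rV[R]_d).

Lemma norm2_ge0 v : 0 <= norm2 v.
Proof. exact: sqrtr_ge0. Qed.

Lemma norm2Z (k : R) v : norm2 (k *: v) = `|k| * norm2 v.
Proof.
rewrite /norm2 -sqrtr_sqr -sqrtrM ?sqr_ge0 // mulr_sumr.
by congr Num.sqrt; apply: eq_bigr => i _; rewrite mxE exprMn.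
Qed.

Lemma norm2_0 : norm2 (0 : 'rV[R]_d) = 0.
Proof. by rewrite -(scale0r (0 : 'rV[R]_d)) norm2Z normr0 mul0r. Qed.

Lemma norm2_sum_disjoint (r : seq nat) (F : nat -> 'rV[R]_d) : uniq r ->
    {in r &, forall i k, i != k -> F i = 0 \/ F k = 0} ->
  norm2 (\sum_(i <- r) F i) = \sum_(i <- r) norm2 (F i).
Proof.
elim: r => [|x r IH] /=; first by rewrite !big_nil norm2_0.
move=> /andP[x_notin_r r_uniq] disj; rewrite !big_cons.
have [->|Fx_neq0] := eqVneq (F x) 0.
  rewrite add0r norm2_0 add0r IH // => i k i_r k_r.
  by apply: disj; rewrite inE ?i_r ?k_r orbT.
have F_r0 y : y \in r -> F y = 0.
  move=> y_r; have x_neq_y : x != y by apply: contraNneq x_notin_r => ->.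
  have y_xr : y \in x :: r by rewrite inE y_r orbT.
  have [/eqP|//] := disj x y (mem_head _ _) y_xr x_neq_y.
  by rewrite (negPf Fx_neq0).
by rewrite !big1_seq ?addr0 // => i /andP[_ /F_r0 ->]; rewrite norm2_0.
Qed.

End Norm2.

Lemma jump_mass_identity (R : realType) (s N : R) : 0 < s -> 0 <= N ->
  (Num.sqrt 2)^-1 * Num.sqrt (2 / s * N * (s * N)) = N.
Proof.
move=> s_gt0 N_ge0.
have -> : 2 / s * N * (s * N) = 2 * N ^+ 2.
  by rewrite mulrAC -!mulrA mulKf ?gt_eqF // mulrA expr2.
by rewrite sqrtrM ?sqrtr_sqr ?ger0_norm ?mulKf // gt_eqF // sqrtr_gt0.
Qed.

Section HaarScale.
Variables (R : realType) (m d : nat) (u : nat -> 'rV[R]_d) (j : nat).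
Hypothesis j_gt0 : (0 < j)%N.

Let s : R := Num.sqrt (2 ^+ j).

Lemma expn_half_double : (2 ^ j = 2 ^ (j - 1) + 2 ^ (j - 1))%N.
Proof. by case: j j_gt0 => // k _; rewrite subn1 /= expnS mul2n addnn. Qed.

Lemma haar_block_end l : (0 < l)%N ->
  (2 ^ j * l = 2 ^ j * (l - 1) + 2 ^ (j - 1) + 2 ^ (j - 1))%N.
Proof.
by move=> l_gt0; rewrite -addnA -expn_half_double -mulnSr subn1 prednK.
Qed.

Lemma haar_windowE l t : (0 < l)%N ->
  haar R j l t = haar_window R (2 ^ j * (l - 1)) (2 ^ (j - 1)) t.
Proof. by move=> l_gt0; rewrite /haar (haar_block_end l_gt0). Qed.

Lemma haar_support l t : (0 < l)%N ->
  haar R j l t != 0 -> (2 ^ j * (l - 1) < t <= 2 ^ j * l)%N.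
Proof.
move=> l_gt0; rewrite haar_windowE // (haar_block_end l_gt0).
exact: haar_window_support.
Qed.

Lemma haar_disjoint l l' t : (0 < l)%N -> (0 < l')%N -> l != l' ->
  haar R j l t = 0 \/ haar R j l' t = 0.
Proof.
move=> l_gt0 l'_gt0 l_neq_l'.
have [->|/(haar_support l_gt0) t_in] := eqVneq (haar R j l t) 0; first by left.
have [->|/(haar_support l'_gt0) t_in'] := eqVneq (haar R j l' t) 0.
  by right.
have [lt_l_l'|lt_l'_l|] := ltngtP l l'; last by move/eqP: l_neq_l'.
- have : (2 ^ j * l <= 2 ^ j * (l' - 1))%N by rewrite leq_mul2l; lia.
  lia.
- have : (2 ^ j * l' <= 2 ^ j * (l - 1))%N by rewrite leq_mul2l; lia.
  lia.
Qed.

Lemma Sbar_block l : (0 < l <= 2 ^ (m - j))%N -> (j <= m)%N ->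
  Sbar m u j l = s * norm2 (uhat m u j l).
Proof.
move=> /andP[l_gt0 l_le] j_le_m.
have block_le_T : (2 ^ j * l <= T m)%N.
  by rewrite /T -(subnKC j_le_m) expnD leq_mul2l l_le orbT.
rewrite /Sbar (eq_bigr (fun t =>
    s^-1 * `|haar_window R (2 ^ j * (l - 1)) (2 ^ (j - 1)) t|
      * norm2 (uhat m u j l))) => [|t _]; last first.
  rewrite /zdet norm2Z /haarn haar_windowE // normrM.
  by rewrite ger0_norm ?invr_ge0 ?sqrtr_ge0.
rewrite -mulr_suml -mulr_sumr sum_abs_haar_window ?expn_gt0 ?addn1 //;
  last first.
  by rewrite -(haar_block_end l_gt0).
rewrite -expn_half_double natrX -[2 ^+ j](@sqr_sqrtr R) ?exprn_ge0 //.
by rewrite -/s expr2 mulKf // gt_eqF // sqrtr_gt0 exprn_gt0.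
Qed.

Lemma Pjl_block l : (0 < l)%N -> Pjl m u j l = 2 / s * norm2 (uhat m u j l).
Proof.
move=> l_gt0; rewrite /Pjl (haar_block_end l_gt0).
rewrite (eq_bigr (fun t => s^-1 *
    `|haar_window R (2 ^ j * (l - 1)) (2 ^ (j - 1)) t.+1
      - haar_window R (2 ^ j * (l - 1)) (2 ^ (j - 1)) t|
    * norm2 (uhat m u j l))) => [|t _]; last first.
  rewrite /zdet -scalerBl norm2Z /haarn !haar_windowE // -mulrBr normrM.
  by rewrite ger0_norm ?invr_ge0 ?sqrtr_ge0.
rewrite -mulr_suml -mulr_sumr sum_abs_increments_haar_window ?expn_gt0 //.
by rewrite [s^-1 * _]mulrC.
Qed.

Lemma Sbar_scale_sum :
  Sbar_scale m u j = \sum_(1 <= l < (2 ^ (m - j)).+1) Sbar m u j l.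
Proof.
rewrite /Sbar_scale /zscale exchange_big /=; apply: eq_bigr => t _.
apply: norm2_sum_disjoint; first exact: iota_uniq.
move=> l l'; rewrite !mem_index_iota => /andP[l_gt0 _] /andP[l'_gt0 _] l_neq_l'.
rewrite /zdet /haarn.
by case: (haar_disjoint t l_gt0 l'_gt0 l_neq_l') => ->; [left|right];
  rewrite mulr0 scale0r.
Qed.

End HaarScale.

Theorem lemma6 (R : realType) (m d : nat) (hd : (1 <= d)%N)
    (u : nat -> 'rV[R]_d) :
  (forall j l : nat, (1 <= j <= m)%N -> (1 <= l <= 2 ^ (m - j))%N ->
     norm2 (uhat m u j l) =
       (Num.sqrt 2)^-1 * Num.sqrt (Pjl m u j l * Sbar m u j l)) /\
  (forall j : nat, (1 <= j <= m)%N ->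
     \sum_(1 <= l < (2 ^ (m - j)).+1) norm2 (uhat m u j l) <=
       (Num.sqrt 2)^-1 * Num.sqrt (Pscale m u j * Sbar_scale m u j)).
Proof.
split=> [j l /andP[j_gt0 j_le_m] l_range | j /andP[j_gt0 j_le_m]].
  have /andP[l_gt0 _] := l_range.
  rewrite Pjl_block // Sbar_block //.
  by rewrite jump_mass_identity ?sqrtr_gt0 ?exprn_gt0 ?norm2_ge0.
rewrite /Pscale Sbar_scale_sum //.
set N := \sum_(1 <= l < _) norm2 (uhat m u j l).
have -> : \sum_(1 <= l < (2 ^ (m - j)).+1) Pjl m u j l
          = 2 / Num.sqrt (2 ^+ j) * N.
  rewrite mulr_sumr; apply: eq_big_nat => l /andP[l_gt0 _].
  by rewrite Pjl_block.
have -> : \sum_(1 <= l < (2 ^ (m - j)).+1) Sbar m u j l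
          = Num.sqrt (2 ^+ j) * N.
  by rewrite mulr_sumr; apply: eq_big_nat => l l_range; rewrite Sbar_block.
rewrite jump_mass_identity ?sqrtr_gt0 ?exprn_gt0 //.
by apply: sumr_ge0 => l _; exact: norm2_ge0.
Qed.
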